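(* Fix a real $\alpha>4$. Let $A$ be the event that there exists a line $\ell$ of $Q$ not containing $x$ with $|\ell\cap U|\ge\lceil\log s\rceil$. Then $\mathbb{P}(A)\to 0$ as $s\to\infty$, uniformly over all locally sparse generalized quadrangles $Q$ of order $(s,t)$ with $t\ge s(\log s)^{2\alpha}$ and all points $x$ of $Q$.
   Context: A generalized quadrangle of order $(s,t)$ (with $s,t\ge 2$) is a point-line incidence structure in which every point lies on $t+1$ lines, every line contains $s+1$ points, two distinct points lie on at most one common line, and for every point $x$ and line $\ell$ with $x\notin\ell$ there is a unique point $x'\in\ell$ and a unique line $\ell'$ with $x,x'\in\ell'$. The quadrangle is locally sparse if for every set of three points, the number of points collinear with all three is at most $s+1$. Let $\mathcal{P}$ be the point set. For a point $u$, $u^{\perp}$ is the set of points collinear with $u$ (including $u$). For $R\subseteq\mathcal{P}$, $R^{\bowtie}=\bigcup_{y\in R}y^{\perp}$. Logarithms are natural. Random construction: fix $\alpha>4$ and a point $x$. Define $p$ by $ps=(s\log t-\alpha s\log\log s)/t$. Independently for each of the $t+1$ lines $\ell$ through $x$, with probability $ps$ the line is chosen, and on each chosen line one point of $\ell\setminus\{x\}$ is selected uniformly at random (independently). Let $S$ be the set of selected points and $U=\mathcal{P}\setminus(S\cup\{x\})^{\bowtie}$. *)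

From Stdlib Require Import Reals ZArith.
From mathcomp Require Import all_boot.

Set Implicit Arguments.
Unset Strict Implicit.
Unset Printing Implicit Defensive.

Section GQ.
Variables (P L : finType) (I : P -> L -> bool).

Record is_GQ (s t : nat) : Prop := {
  gq_s : (2 <= s)%N;
  gq_t : (2 <= t)%N;
  gq_pt : forall p : P, #|[set l : L | I p l]| = t.+1;
  gq_ln : forall l : L, #|[set p : P | I p l]| = s.+1;
  gq_two : forall p q : P, p != q -> (#|[set l : L | I p l && I q l]| <= 1)%N;
  gq_ax : forall (x : P) (l : L), ~~ I x l ->
    #|[set pr : P * L | [&& I pr.1 l, I x pr.2 & I pr.1 pr.2]]| = 1
}.

Definition perp (u : P) : {set P} :=
  [set q : P | (q == u) || [exists l : L, I u l && I q l]].

Definition bowtie (R : {set P}) : {set P} := \bigcup_(y in R) perp y.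

Definition locally_sparse (s : nat) : Prop :=
  forall a b c : P, a != b -> a != c -> b != c ->
    (#|perp a :&: perp b :&: perp c| <= s.+1)%N.

Local Open Scope R_scope.

(* the number p*s of the paper *)
Definition ps (alpha : R) (s t : nat) : R :=
  (INR s * ln (INR t) - alpha * INR s * ln (ln (INR s))) / INR t.

(* Outcome space: omega : {ffun L -> option P}; omega l = Some y means line l
   (through x) was chosen and y selected on it; None means l not chosen.
   Probability of a single line outcome: *)
Definition line_weight (alpha : R) (s t : nat) (x : P) (l : L) (o : option P) : R :=
  if I x l then
    match o with
    | None => 1 - ps alpha s t
    | Some y => if I y l && (y != x) then ps alpha s t / INR s else 0
    end
  else
    match o with None => 1 | Some _ => 0 end.

Definition outcome_prob (alpha : R) (s t : nat) (x : P) (w : {ffun L -> option P}) : R :=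
  \big[Rmult/R1]_(l : L) line_weight alpha s t x l (w l).

Definition selected (w : {ffun L -> option P}) : {set P} :=
  [set y : P | [exists l : L, w l == Some y]].

Definition Uset (x : P) (w : {ffun L -> option P}) : {set P} :=
  ~: bowtie (x |: selected w).

Definition Rceil (r : R) : Z := (- Int_part (- r))%Z.

Definition eventA (s : nat) (x : P) (w : {ffun L -> option P}) : bool :=
  [exists l : L, ~~ I x l &&
     (Z.of_nat #|[set u in Uset x w | I u l]| >=? Rceil (ln (INR s)))%Z].

Definition probA (alpha : R) (s t : nat) (x : P) : R :=
  \big[Rplus/R0]_(w : {ffun L -> option P})
     (if eventA s x w then outcome_prob alpha s t x w else 0).

End GQ.

From Stdlib Require Import Reals ZArith Lra Lia.
From mathcomp Require Import all_boot.
From mathcomp Require Import Rstruct zify.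

Set Implicit Arguments.
Unset Strict Implicit.
Unset Printing Implicit Defensive.

Local Open Scope R_scope.

(* Proof by a first-moment (union) bound.  Fix a line l not through x and k
   distinct points f 0, ..., f (k-1) of l outside x^perp.  Each line m through
   x disjoint from l carries k distinct projections of the f i (a point of m
   is collinear with at most one point of l \ x^perp), and all f i survive in
   U only if the point selected on m avoids them; this has probability at most
   1 - k p / s on each of the >= t such lines, independently, hence
   probability at most exp (- k p / s) ^ t.  Summing over the <= (s+1)^k
   tuples on each of the <= (s+1)^2 (t+1)^2 lines, with k = ceil (log s), gives
   P(A) <= 16 exp (48 - 7 log s) once t >= s (log s)^(2 alpha), alpha > 4. *)

Section RealBigops.
Variable T : finType.

Lemma sum_ge0 (Q : pred T) (F : T -> R) :
  (forall i, Q i -> 0 <= F i) -> 0 <= \big[Rplus/R0]_(i | Q i) F i.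
Proof. by move=> F0; apply: (big_ind (fun v => 0 <= v)) => //; [lra | move=> *; lra]. Qed.

Lemma sum_le (Q : pred T) (F G : T -> R) :
  (forall i, Q i -> F i <= G i) ->
  \big[Rplus/R0]_(i | Q i) F i <= \big[Rplus/R0]_(i | Q i) G i.
Proof. by move=> FG; apply: (big_ind2 (fun a b => a <= b)) => //; [lra | move=> *; lra]. Qed.

Lemma sum_subset_le (Q Q' : pred T) (F : T -> R) :
  (forall i, Q i -> Q' i) -> (forall i, Q' i -> 0 <= F i) ->
  \big[Rplus/R0]_(i | Q i) F i <= \big[Rplus/R0]_(i | Q' i) F i.
Proof.
move=> QQ' F0; rewrite [X in _ <= X](bigID Q) /=.
have -> : \big[Rplus/R0]_(i | Q' i && Q i) F i = \big[Rplus/R0]_(i | Q i) F i.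
  by apply: eq_bigl => i; case: (boolP (Q i)) => [/QQ' -> | _]; rewrite ?andbF.
have : 0 <= \big[Rplus/R0]_(i | Q' i && ~~ Q i) F i by apply: sum_ge0 => i /andP [/F0].
lra.
Qed.

Lemma term_le_sum (Q : pred T) (F : T -> R) j :
  Q j -> (forall i, Q i -> 0 <= F i) -> F j <= \big[Rplus/R0]_(i | Q i) F i.
Proof.
move=> Qj F0; rewrite (bigD1 j) //=.
have : 0 <= \big[Rplus/R0]_(i | Q i && (i != j)) F i by apply: sum_ge0 => i /andP [/F0].
lra.
Qed.

Lemma sum_const (Q : pred T) c :
  \big[Rplus/R0]_(i | Q i) c = INR #|[set i | Q i]| * c.
Proof.
rewrite big_const cardsE; elim: #|_| => [|n IH]; first by rewrite /=; lra.
by rewrite iterS IH S_INR; lra.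
Qed.

Lemma prod_ge0 (Q : pred T) (F : T -> R) :
  (forall i, Q i -> 0 <= F i) -> 0 <= \big[Rmult/R1]_(i | Q i) F i.
Proof.
move=> F0; apply: (big_ind (fun v => 0 <= v)) => //; first lra.
exact: Rmult_le_pos.
Qed.

Lemma prod_le (Q : pred T) (F G : T -> R) :
  (forall i, Q i -> 0 <= F i <= G i) ->
  \big[Rmult/R1]_(i | Q i) F i <= \big[Rmult/R1]_(i | Q i) G i.
Proof.
move=> FG; suff [] : 0 <= \big[Rmult/R1]_(i | Q i) F i <= \big[Rmult/R1]_(i | Q i) G i by [].
apply: (big_ind2 (fun a b => 0 <= a <= b)) => //; first lra.
move=> a b c d [a0 ab] [c0 cd]; split; first exact: Rmult_le_pos.
exact: Rmult_le_compat.
Qed.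

Lemma prod_if_const (C : pred T) e :
  \big[Rmult/R1]_i (if C i then e else 1) = e ^ #|[set i | C i]|.
Proof. by rewrite -big_mkcond big_const cardsE; elim: #|_| => //= n ->. Qed.

End RealBigops.

Lemma sum_option (T : finType) (B : pred (option T)) (F : option T -> R) :
  \big[Rplus/R0]_(o | B o) F o =
  (if B None then F None else 0) + \big[Rplus/R0]_(y | B (Some y)) F (Some y).
Proof.
rewrite (bigID (pred1 None)) /= [X in _ + X](reindex_omap Some id); last first.
  by case=> [y|] // /andP [].
congr (_ + _); last by apply: eq_bigl => y; rewrite /= eqxx !andbT.
case: (boolP (B None)) => BN.
  by rewrite (big_pred1 None) // => -[y|]; rewrite /= ?andbF ?BN.
by rewrite big_pred0 // => -[y|]; rewrite ?andbF ?(negbTE BN).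
Qed.

Lemma exp_monotone a b : a <= b -> exp a <= exp b.
Proof. by case/Rle_lt_or_eq_dec => [/exp_increasing /Rlt_le | ->]; [| right]. Qed.

Lemma ln_monotone a b : 0 < a -> a <= b -> ln a <= ln b.
Proof.
move=> a0; case/Rle_lt_or_eq_dec => [/(ln_increasing _ _ a0) /Rlt_le | ->] //.
by right.
Qed.

Lemma INR_expn n k : INR (n ^ k)%N = INR n ^ k.
Proof. by elim: k => [|k IH] //; rewrite expnS mult_INR IH. Qed.

Lemma pow_antitone e m n : 0 <= e <= 1 -> (m <= n)%N -> e ^ n <= e ^ m.
Proof.
move=> e01 /subnKC <-; rewrite pow_add -{2}(Rmult_1_r (e ^ m)).
apply: Rmult_le_compat_l; first by apply: pow_le; lra.
by rewrite -(pow1 (n - m)); apply: pow_incr.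
Qed.

Lemma exp_pow u n : exp u ^ n = exp (INR n * u).
Proof.
elim: n => [|n IH]; first by rewrite Rmult_0_l exp_0.
by rewrite -[exp u ^ n.+1]/(exp u * exp u ^ n) IH S_INR -exp_plus; congr exp; ring.
Qed.

Lemma ln2_lt1 : ln 2 < 1.
Proof.
rewrite -(ln_exp 1); apply: ln_increasing; first lra.
by have := exp_ineq1 1; lra.
Qed.

Lemma exp3_le27 : exp 3 <= 27.
Proof.
have e3 := exp_le_3; have e0 := exp_pos 1.
rewrite (_ : 3 = 1 + 1 + 1); last ring.
rewrite !exp_plus; have : exp 1 * exp 1 <= 9 by nra.
nra.
Qed.

(* A crude bound log r <= r / 2, from 1 + u <= exp u at u = log (r / 2). *)
Lemma ln_le_half r : 0 < r -> ln r <= r / 2.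
Proof.
move=> r0; have := exp_ineq1_le (ln (r / 2)); rewrite exp_ln; last lra.
rewrite /Rdiv ln_mult; [rewrite ln_Rinv | lra | apply: Rinv_0_lt_compat]; try lra.
by have := ln2_lt1; lra.
Qed.

Lemma card_bigcup_le (T J : finType) (A : {set J}) (F : J -> {set T}) :
  (#|\bigcup_(i in A) F i| <= \sum_(i in A) #|F i|)%N.
Proof.
apply: (big_ind2 (fun (S : {set T}) n => #|S| <= n)%N) => [|S1 n1 S2 n2 h1 h2|//].
  by rewrite cards0.
by rewrite cardsU; lia.
Qed.

Section Geometry.
Variables (P L : finType) (I : P -> L -> bool) (s t : nat).
Hypothesis gq : is_GQ I s t.

Lemma perpP u v : reflect (v = u \/ exists l, I u l && I v l) (v \in perp I u).
Proof.
rewrite inE; apply: (iffP orP) => [[/eqP -> | /existsP] | [-> | /existsP]]; by auto.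
Qed.

Lemma gq_join_exists y l : ~~ I y l -> exists z n, [&& I z l, I y n & I z n].
Proof.
move=> yl; have /eqP /cards1P [[z n] Hzn] := gq_ax gq yl.
by exists z, n; move: (set11 (z, n)); rewrite -Hzn inE.
Qed.

Lemma gq_join_unique y l z n z' n' : ~~ I y l ->
  [&& I z l, I y n & I z n] -> [&& I z' l, I y n' & I z' n'] -> z = z' /\ n = n'.
Proof.
move=> yl Hzn Hzn'; have /eqP /cards1P [pr Hpr] := gq_ax gq yl.
have : (z, n) \in [set pr] by rewrite -Hpr inE.
have : (z', n') \in [set pr] by rewrite -Hpr inE.
by rewrite !inE => /eqP <- /eqP [-> ->].
Qed.

Lemma lines_meeting_le1 x l : ~~ I x l ->
  (#|[set m | I x m && [exists z, I z m && I z l]]| <= 1)%N.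
Proof.
move=> xl; apply/card_le1_eqP => m1 m2; rewrite !inE.
move=> /andP [xm1 /existsP [z1 /andP [z1m1 z1l]]] /andP [xm2 /existsP [z2 /andP [z2m2 z2l]]].
case: (gq_join_unique xl (z := z1) (n := m1) (z' := z2) (n' := m2)) => //.
  by rewrite z1l xm1 z1m1.
by rewrite z2l xm2 z2m2.
Qed.

Lemma lines_missing_ge x l : ~~ I x l ->
  (t <= #|[set m | I x m && ~~ [exists z, I z m && I z l]]|)%N.
Proof.
move=> xl; have := lines_meeting_le1 xl; have := gq_pt gq x.
rewrite -(cardsID [set m | [exists z, I z m && I z l]] [set m | I x m]).
rewrite (_ : _ :&: _ = [set m | I x m && [exists z, I z m && I z l]]); last first.
  by apply/setP => m; rewrite !inE.
rewrite (_ : _ :\: _ = [set m | I x m && ~~ [exists z, I z m && I z l]]); last first.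
  by apply/setP => m; rewrite !inE andbC.
lia.
Qed.

Lemma card_line_but_point x m : I x m -> #|[set y | I y m && (y != x)]| = s.
Proof.
move=> xm; have := gq_ln gq m.
rewrite (_ : [set p | I p m] = x |: [set y | I y m && (y != x)]); last first.
  by apply/setP => y; rewrite !inE; case: eqP => [-> | _]; rewrite ?xm ?andbT.
by rewrite cardsU1 !inE eqxx andbF => -[].
Qed.

Lemma perp_meets_line u m : ~~ I u m -> exists2 y, I y m & u \in perp I y.
Proof.
move=> um; have [y [n /and3P [ym un yn]]] := gq_join_exists um.
by exists y => //; apply/perpP; right; exists n; rewrite yn un.
Qed.

Lemma perp_unique_on_line x l m y u u' :
  I x m -> (forall z, ~~ (I z m && I z l)) ->
  I u l -> I u' l -> u \notin perp I x -> u' \notin perp I x ->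
  I y m -> u \in perp I y -> u' \in perp I y -> u = u'.
Proof.
move=> xm lm ul u'l ux u'x ym.
have off_x v : I v l -> v \notin perp I x -> v = y -> False.
  move=> _ vx vy; case/negP: vx; apply/perpP; right; exists m; by rewrite xm -vy in ym *.
have yl : ~~ I y l by apply/negP => yl; move: (lm y); rewrite ym yl.
case/perpP => [/(off_x _ ul ux) [] | [n /andP [yn un]]].
case/perpP => [/(off_x _ u'l u'x) [] | [n' /andP [yn' u'n']]].
case: (gq_join_unique yl (z := u) (n := n) (z' := u') (n' := n')) => //.
  by rewrite ul yn un.
by rewrite u'l yn' u'n'.
Qed.

(* Each f i is collinear with some point of
   m \ {x} (its projection), and distinct f i have distinct projections. *)
Lemma card_unseen_points x l m k (f : 'I_k -> P) :
  I x m -> (forall z, ~~ (I z m && I z l)) -> injective f ->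
  (forall i, I (f i) l && (f i \notin perp I x)) ->
  (#|[set y | I y m && (y != x) && [forall i, f i \notin perp I y]]| + k <= s)%N.
Proof.
move=> xm lm f_inj f_ok.
set A := [set y | I y m && (y != x)].
set Seen := [set y | [exists i, f i \in perp I y]].
have proj_ex i : exists2 y, I y m & f i \in perp I y.
  apply: perp_meets_line; apply/negP => fim.
  by case/andP: (f_ok i) => _ /perpP []; right; exists m; rewrite xm fim.
have [proj proj_m proj_perp] := fin_all_exists2 proj_ex.
have proj_x i : proj i != x.
  by apply/eqP => pix; case/andP: (f_ok i) => _; rewrite -pix proj_perp.
have proj_inj : injective proj.
  move=> i j pij; apply: f_inj.
  case/andP: (f_ok i) => fil fi_x; case/andP: (f_ok j) => fjl fj_x.
  apply: (perp_unique_on_line xm lm fil fjl fi_x fj_x (proj_m i) (proj_perp i)).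
  by rewrite pij proj_perp.
have seen_ge : (k <= #|A :&: Seen|)%N.
  rewrite -[k]card_ord -(card_imset _ proj_inj); apply: subset_leq_card.
  apply/subsetP => _ /imsetP [i _ ->]; rewrite !inE proj_m proj_x.
  by apply/existsP; exists i; rewrite proj_perp.
have unseen_le : (#|[set y | I y m && (y != x) && [forall i, f i \notin perp I y]]|
                   <= #|A :\: Seen|)%N.
  apply: subset_leq_card; apply/subsetP => y; rewrite !inE => /andP [-> /forallP unseen].
  by rewrite andbT; apply/existsP => -[i]; apply/negP.
have := cardsID Seen A; rewrite (card_line_but_point xm); lia.
Qed.

(* Crude size bounds: every point is collinear with a point of a fixed line,
   and every line carries a point. *)
Lemma card_points_le : (#|P| <= s.+1 * (t.+1 * s.+1))%N.
Proof.
have [x _ | no_point] := pickP P; last by rewrite eq_card0.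
have /card_gt0P [m0] : (0 < #|[set l | I x l]|)%N by rewrite (gq_pt gq).
rewrite inE => xm0.
have cover : [set: P] \subset
    \bigcup_(y in [set y | I y m0]) \bigcup_(n in [set n | I y n]) [set u | I u n].
  apply/subsetP => u _; case um0: (I u m0).
    by apply/bigcupP; exists u; rewrite ?inE //; apply/bigcupP; exists m0; rewrite inE.
  have [y [n /and3P [ym0 un yn]]] := gq_join_exists (negbT um0).
  by apply/bigcupP; exists y; rewrite ?inE //; apply/bigcupP; exists n; rewrite inE.
rewrite -cardsT; apply: (leq_trans (subset_leq_card cover)).
apply: (leq_trans (card_bigcup_le _ _)).
rewrite -{1}(gq_ln gq m0) -sum_nat_const; apply: leq_sum => y _.
apply: (leq_trans (card_bigcup_le _ _)).
by rewrite -(gq_pt gq y) -sum_nat_const; apply: leq_sum => n _; rewrite (gq_ln gq).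
Qed.

Lemma card_lines_le : (#|L| <= #|P| * t.+1)%N.
Proof.
have cover : [set: L] \subset \bigcup_(u in [set: P]) [set l | I u l].
  apply/subsetP => l _.
  have /card_gt0P [u] : (0 < #|[set p | I p l]|)%N by rewrite (gq_ln gq).
  by rewrite inE => ul; apply/bigcupP; exists u; rewrite ?inE.
rewrite -cardsT; apply: (leq_trans (subset_leq_card cover)).
apply: (leq_trans (card_bigcup_le _ _)).
by rewrite -cardsT -sum_nat_const; apply: leq_sum => u _; rewrite (gq_pt gq).
Qed.

Lemma card_lines_le_sq : (#|L| <= s.+1 ^ 2 * t.+1 ^ 2)%N.
Proof.
apply: (leq_trans card_lines_le); have := card_points_le.
rewrite -(leq_pmul2r (ltn0Sn t)) => /leq_trans; apply.
by rewrite -!mulnn; nia.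
Qed.

End Geometry.

Section LineDistribution.
Variables (P L : finType) (I : P -> L -> bool) (s t : nat) (alpha : R) (x : P).
Hypothesis gq : is_GQ I s t.
Local Notation p := (ps alpha s t).
Hypothesis p_unit : 0 <= p <= 1.
Local Notation weight := (line_weight I alpha s t x).
Local Notation Pr := (outcome_prob I alpha s t x).

Lemma INR_s_gt0 : 0 < INR s.
Proof. by apply: lt_0_INR; apply/ltP; have := gq_s gq; lia. Qed.

Lemma p_div_s_ge0 : 0 <= p / INR s.
Proof. by apply: Rmult_le_pos; [lra | left; apply: Rinv_0_lt_compat; apply: INR_s_gt0]. Qed.

Lemma weight_ge0 l o : 0 <= weight l o.
Proof.
have := p_div_s_ge0; rewrite /line_weight.
by case: (I x l); case: o => [y|]; rewrite ?if_same //; try case: ifP; lra.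
Qed.

Lemma outcome_prob_ge0 w : 0 <= Pr w.
Proof. by apply: prod_ge0 => l _; apply: weight_ge0. Qed.

Lemma prob_family (B : L -> pred (option P)) :
  \big[Rplus/R0]_(w in family B) Pr w =
  \big[Rmult/R1]_m \big[Rplus/R0]_(o | B m o) weight m o.
Proof. by rewrite (bigA_distr_big_dep _ weight). Qed.

Lemma mass_selected l (C : pred P) :
  I x l ->
  \big[Rplus/R0]_(y | C y) weight l (Some y) =
  INR #|[set y | I y l && (y != x) && C y]| * (p / INR s).
Proof.
move=> xl; rewrite -sum_const [RHS]big_mkcond [LHS]big_mkcond.
apply: eq_bigr => y _; rewrite /line_weight xl.
by case: (C y); rewrite ?andbT ?andbF ?if_same.
Qed.

Lemma line_mass_forbidden l (B : pred (option P)) k :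
  I x l -> (#|[set y | I y l && (y != x) && B (Some y)]| + k <= s)%N ->
  \big[Rplus/R0]_(o | B o) weight l o <= 1 - INR k * p / INR s.
Proof.
move=> xl card_le; rewrite sum_option mass_selected // {1}/line_weight xl.
have : INR #|[set y | I y l && (y != x) && B (Some y)]| * (p / INR s)
       <= (INR s - INR k) * (p / INR s).
  apply: Rmult_le_compat_r; first exact: p_div_s_ge0.
  by rewrite -minus_INR; [apply: le_INR; apply/leP | apply/leP]; lia.
have -> : (INR s - INR k) * (p / INR s) = p - INR k * p / INR s.
  by field; have := INR_s_gt0; lra.
by case: (B None); lra.
Qed.

Lemma line_mass_le1 l (B : pred (option P)) :
  \big[Rplus/R0]_(o | B o) weight l o <= 1.
Proof.
case xl: (I x l); last first.
  rewrite sum_option big1 => [|y _]; rewrite /line_weight xl //.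
  by case: (B None); lra.
have card_le : (#|[set y | I y l && (y != x) && B (Some y)]| + 0 <= s)%N.
  rewrite addn0 -(card_line_but_point gq xl); apply: subset_leq_card.
  by apply/subsetP => y; rewrite !inE => /andP [].
by have := line_mass_forbidden xl card_le; rewrite Rmult_0_l /Rdiv Rmult_0_l Rminus_0_r.
Qed.

End LineDistribution.

Section UnionBound.
Variables (P L : finType) (I : P -> L -> bool) (s t : nat) (alpha : R) (x : P).
Hypothesis gq : is_GQ I s t.
Local Notation p := (ps alpha s t).
Hypothesis p_unit : 0 <= p <= 1.
Local Notation Pr := (outcome_prob I alpha s t x).
Local Notation U := (Uset I x).

Lemma Uset_not_perp_x w u : u \in U w -> u \notin perp I x.
Proof. by rewrite inE; apply: contra => ux; apply/bigcupP; exists x; rewrite ?setU11. Qed.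

Lemma Uset_not_perp_selected w u m y :
  u \in U w -> w m = Some y -> u \notin perp I y.
Proof.
move=> uU wm; move: uU; rewrite inE; apply: contra => uy; apply/bigcupP; exists y => //.
by rewrite !inE; apply/orP; right; apply/existsP; exists m; rewrite wm.
Qed.

(* Fix a line l off x and k distinct points f i of l outside x^perp.  For all of
   them to lie in U, the point selected on each line m through x must avoid
   their k projections onto m; on the (at least t) lines m through x disjoint
   from l this has probability at most 1 - k p / s <= exp (- k p / s). *)
Lemma prob_points_in_U l k (f : 'I_k -> P) :
  ~~ I x l -> injective f -> (forall i, I (f i) l && (f i \notin perp I x)) ->
  \big[Rplus/R0]_w (if [forall i, f i \in U w] then Pr w else 0)
  <= exp (- (INR k * p / INR s)) ^ t.
Proof.
move=> xl f_inj f_ok.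
pose avoid (m : L) : pred (option P) :=
  fun o => if o is Some y then [forall i, f i \notin perp I y] else true.
pose e := exp (- (INR k * p / INR s)).
have e01 : 0 <= e <= 1.
  split; first by left; apply: exp_pos.
  rewrite /e -exp_0; apply: exp_monotone.
  have := Rmult_le_pos _ _ (pos_INR k) (p_div_s_ge0 gq p_unit).
  by rewrite /Rdiv Rmult_assoc; lra.
rewrite -big_mkcond /=.
apply: Rle_trans; first apply: (sum_subset_le (Q' := fun w => w \in family avoid)).
- move=> w /forallP wU; apply/familyP => m; rewrite /avoid.
  case wm: (w m) => [y|] //; apply/forallP => i.
  exact: (Uset_not_perp_selected (wU i) wm).
- by move=> w _; apply: outcome_prob_ge0.
rewrite prob_family.
pose disjoint_from_l m := I x m && ~~ [exists z, I z m && I z l].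
apply: Rle_trans; first apply: (prod_le (G := fun m => if disjoint_from_l m then e else 1)).
  move=> m _; split; first by apply: sum_ge0 => o _; apply: weight_ge0.
  case: ifP => [/andP [xm /existsPn ml] | _]; last exact: line_mass_le1.
  apply: Rle_trans; first apply: (line_mass_forbidden gq p_unit (k := k) xm).
    exact: (card_unseen_points gq xm ml f_inj f_ok).
  by have := exp_ineq1_le (- (INR k * p / INR s)); rewrite /e; lra.
rewrite (prod_if_const disjoint_from_l e) -/e; apply: pow_antitone => //.
exact: (lines_missing_ge gq xl).
Qed.

Definition good_tuple k l (f : {ffun 'I_k -> P}) : bool :=
  injectiveb f && [forall i, I (f i) l && (f i \notin perp I x)].

Lemma card_good_tuples k l :
  (#|[set f : {ffun 'I_k -> P} | good_tuple l f]| <= s.+1 ^ k)%N.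
Proof.
have := card_ffun_on 'I_k [set u | I u l]; rewrite card_ord (gq_ln gq) => <-.
apply: subset_leq_card; apply/subsetP => f; rewrite !inE => /andP [_ /forallP f_ok].
by apply/ffun_onP => i; rewrite inE; case/andP: (f_ok i).
Qed.

Lemma good_tuple_in_U w l k : (k <= #|[set u in U w | I u l]|)%N ->
  exists2 f : {ffun 'I_k -> P}, good_tuple l f & [forall i, f i \in U w].
Proof.
set S := [set u in U w | I u l] => kS.
pose f := [ffun i : 'I_k => enum_val (A := S) (widen_ord kS i)].
have fS i : f i \in S by rewrite ffunE; apply: enum_valP.
exists f; last by apply/forallP => i; case/setIdP: (fS i).
apply/andP; split.
  apply/injectiveP => i j; rewrite !ffunE => /enum_val_inj /(congr1 val) ij.
  exact: val_inj.
apply/forallP => i; case/setIdP: (fS i) => uU ->.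
by rewrite (Uset_not_perp_x uU).
Qed.

Definition threshold (n : nat) : nat := Z.to_nat (Rceil (ln (INR n))).

Lemma eventA_le_tuples w (k := threshold s) :
  (if eventA I s x w then Pr w else 0) <=
  \big[Rplus/R0]_(l | ~~ I x l) \big[Rplus/R0]_(f : {ffun 'I_k -> P} | good_tuple l f)
     (if [forall i, f i \in U w] then Pr w else 0).
Proof.
pose G (f : {ffun 'I_k -> P}) := if [forall i, f i \in U w] then Pr w else 0.
have G0 f : 0 <= G f by rewrite /G; case: ifP => _; [apply: outcome_prob_ge0 | lra].
case: ifP => [/existsP [l /andP [xl /Z.geb_le big_l]] | _]; last first.
  by apply: sum_ge0 => l _; apply: sum_ge0 => f _; apply: G0.
have [f f_good fU] : exists2 f : {ffun 'I_k -> P}, good_tuple l f & [forall i, f i \in U w].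
  by apply: good_tuple_in_U; apply/leP; rewrite /k /threshold; lia.
have pick_f : G f <= \big[Rplus/R0]_(f | good_tuple l f) G f.
  by apply: term_le_sum.
have pick_l : \big[Rplus/R0]_(f | good_tuple l f) G f <=
    \big[Rplus/R0]_(l | ~~ I x l) \big[Rplus/R0]_(f | good_tuple l f) G f.
  apply: (term_le_sum (F := fun l => \big[Rplus/R0]_(f | good_tuple l f) G f)) => // l' _.
  exact: sum_ge0.
have Gf : G f = Pr w by rewrite /G fU.
by apply: (Rle_trans _ _ _ _ pick_l); rewrite -Gf.
Qed.

Lemma probA_le (k := threshold s) :
  probA I alpha s t x <= INR #|L| * (INR s.+1 ^ k * exp (- (INR k * p / INR s)) ^ t).
Proof.
pose E := exp (- (INR k * p / INR s)) ^ t.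
have E0 : 0 <= E by apply: pow_le; left; apply: exp_pos.
apply: Rle_trans; first exact: (sum_le (fun w _ => eventA_le_tuples w)).
rewrite exchange_big; apply: Rle_trans; first apply: (sum_le (G := fun=> INR s.+1 ^ k * E)).
  move=> l xl; rewrite exchange_big.
  apply: Rle_trans; first apply: (sum_le (G := fun=> E)).
    move=> f /andP [/injectiveP f_inj /forallP f_ok].
    exact: (prob_points_in_U xl f_inj f_ok).
  rewrite sum_const; apply: Rmult_le_compat_r => //.
  by rewrite -INR_expn; apply: le_INR; apply/leP; apply: card_good_tuples.
rewrite (sum_const (fun l => ~~ I x l)); apply: Rmult_le_compat_r.
  by apply: Rmult_le_pos => //; apply: pow_le; apply: pos_INR.
by apply: le_INR; apply/leP; apply: max_card.
Qed.

End UnionBound.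

Section Asymptotics.
Variables (alpha : R) (s t : nat).
Hypotheses (alpha_gt4 : 4 < alpha) (s_large : exp 27 <= INR s)
  (t_large : INR s * Rpower (ln (INR s)) (2 * alpha) <= INR t).

Local Notation S := (INR s).
Local Notation T := (INR t).

Lemma S_gt0 : 0 < S.
Proof. by have := exp_pos 27; lra. Qed.

Lemma lnS_ge27 : 27 <= ln S.
Proof. by rewrite -(ln_exp 27); apply: ln_monotone => //; apply: exp_pos. Qed.

Lemma lnlnS_ge3 : 3 <= ln (ln S).
Proof.
rewrite -(ln_exp 3); apply: ln_monotone; first exact: exp_pos.
by have := exp3_le27; have := lnS_ge27; lra.
Qed.

Lemma lnT_ge : 0 < T /\ ln S + 2 * alpha * ln (ln S) <= ln T.
Proof.
have hS := S_gt0; have hR : 0 < Rpower (ln S) (2 * alpha) by apply: exp_pos.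
have hT : 0 < T by have := Rmult_lt_0_compat _ _ hS hR; lra.
split => //; have := ln_monotone (Rmult_lt_0_compat _ _ hS hR) t_large.
by rewrite ln_mult // /Rpower ln_exp; lra.
Qed.

Lemma ps_unit : 0 <= ps alpha s t <= 1.
Proof.
have hS := S_gt0; have [hT hlnT] := lnT_ge; have hb := lnlnS_ge3; have ha := lnS_ge27.
set a := ln S in ha hlnT *; set b := ln a in hb hlnT *.
rewrite /ps -/a -/b; set r := T / S.
have hTr : T = S * r by rewrite /r; field; lra.
have hr : exp (2 * alpha * b) <= r.
  apply: (Rmult_le_reg_l S) => //; rewrite -hTr.
  by move: t_large; rewrite /Rpower -/a -/b Rmult_assoc.
have r_pos : 0 < r by have := exp_pos (2 * alpha * b); lra.
have a2_r : a * a <= r.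
  apply: Rle_trans hr; rewrite -{1 2}(exp_ln a) -?exp_plus; last lra.
  by apply: exp_monotone; rewrite -/b; nra.
have lnT : ln T = a + ln r by rewrite hTr ln_mult.
split.
  apply: Rmult_le_pos; last by left; apply: Rinv_0_lt_compat.
  have : 0 <= S * (ln T - alpha * b) by apply: Rmult_le_pos; nra.
  lra.
apply: (Rmult_le_reg_l T) => //.
have -> : T * ((S * ln T - alpha * S * b) / T) = S * (ln T - alpha * b) by field; lra.
have lnr := ln_le_half r_pos; have ab_pos : 0 <= alpha * b by nra.
have a27 : 27 * a <= a * a by apply: Rmult_le_compat_r; lra.
have key : ln T - alpha * b <= r by lra.
have : S * (ln T - alpha * b) <= S * r by apply: Rmult_le_compat_l; lra.
lra.
Qed.

(* The exponent of the union bound: with K >= log s points per line, the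
   terms 2 log s + 2 log t (number of lines), K log (2 s) (number of tuples)
   and - K (log t - alpha log log s) (their probability) add up to at most
   48 - 7 log s, since alpha log log s >= 12. *)
Lemma exponent_le K : ln S <= K ->
  2 * ln S + 2 * ln T + K * (ln 2 + ln S) - K * (ln T - alpha * ln (ln S))
  <= 48 - 7 * ln S.
Proof.
move=> hK; have [_ hc] := lnT_ge; have ha := lnS_ge27; have hb := lnlnS_ge3.
have hln2 := ln2_lt1; have hln2p : 0 < ln 2 by rewrite -ln_1; apply: ln_increasing; lra.
set a := ln S in hK hc ha hb *; set b := ln a in hc hb *; set c := ln T in hc *.
have hab : 12 <= alpha * b by nra.
have st1 : (2 - K) * c <= (2 - K) * (a + 2 * alpha * b) by apply: Rmult_le_compat_neg_l; lra.
have st2 : (ln 2 - alpha * b) * K <= (ln 2 - alpha * b) * a.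
  by apply: Rmult_le_compat_neg_l; lra.
have st3 : (4 - a) * (alpha * b) <= (4 - a) * 12 by apply: Rmult_le_compat_neg_l; lra.
nra.
Qed.

Lemma union_bound_small (n k : nat) :
  (n <= s.+1 ^ 2 * t.+1 ^ 2)%N -> ln S <= INR k ->
  INR n * (INR s.+1 ^ k * exp (- (INR k * ps alpha s t / S)) ^ t)
  <= 16 * exp (48 - 7 * ln S).
Proof.
move=> hn hk; have hS := S_gt0; have [hT _] := lnT_ge.
have hS1 : 1 <= S by have := exp_ineq1_le 27; lra.
have hT1 : 1 <= T.
  suff : S <= T by lra.
  have : 1 <= Rpower (ln S) (2 * alpha).
    rewrite -(exp_0) /Rpower; apply: exp_monotone.
    have : 0 <= ln (ln S) by rewrite -ln_1; apply: ln_monotone; have := lnS_ge27; lra.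
    nra.
  nra.
have lines : INR n <= 16 * exp (2 * ln S + 2 * ln T).
  have -> : 2 * ln S + 2 * ln T = ln S + ln S + (ln T + ln T) by ring.
  rewrite !exp_plus !exp_ln //.
  apply: (Rle_trans _ _ _ (le_INR _ _ (elimT leP hn))).
  rewrite mult_INR !INR_expn !S_INR /=.
  have : (S + 1) * (S + 1) <= (2 * S) * (2 * S) by apply: Rmult_le_compat; lra.
  have : (T + 1) * (T + 1) <= (2 * T) * (2 * T) by apply: Rmult_le_compat; lra.
  nra.
have tuples : INR s.+1 ^ k <= exp (INR k * (ln 2 + ln S)).
  rewrite -exp_pow -ln_mult ?exp_ln; try lra.
  by apply: pow_incr; rewrite S_INR; lra.
have prob : exp (- (INR k * ps alpha s t / S)) ^ t =
              exp (- (INR k * (ln T - alpha * ln (ln S)))).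
  by rewrite exp_pow /ps; congr exp; field; lra.
rewrite prob; set E := exp (- _).
have E0 : 0 <= E by left; apply: exp_pos.
apply: (Rle_trans _ (16 * exp (2 * ln S + 2 * ln T) * (exp (INR k * (ln 2 + ln S)) * E))).
  apply: Rmult_le_compat => //; first exact: pos_INR.
    by apply: Rmult_le_pos => //; apply: pow_le; apply: pos_INR.
  exact: Rmult_le_compat_r.
rewrite Rmult_assoc /E -!exp_plus; apply: Rmult_le_compat_l; first lra.
by apply: exp_monotone; have := exponent_le hk; lra.
Qed.

End Asymptotics.

Lemma Rceil_ge r : 0 < r -> r <= INR (Z.to_nat (Rceil r)).
Proof.
move=> r0; rewrite /Rceil; have [lo _] := base_Int_part (- r).
have neg : (Int_part (- r) < 0)%Z by apply: lt_IZR; lra.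
by rewrite INR_IZR_INZ Z2Nat.id ?opp_IZR; [lra | lia].
Qed.

Lemma up_le_INR r n : 0 < r -> (Z.to_nat (up r) <= n)%N -> r <= INR n.
Proof.
move=> r0 /leP /le_INR; have [hup _] := archimed r.
have up0 : (0 < up r)%Z by apply: lt_IZR; lra.
by rewrite INR_IZR_INZ Z2Nat.id; [lra | lia].
Qed.

Lemma tail_small eps : 0 < eps -> exists A, 27 <= A /\ 16 * exp (48 - 7 * A) < eps.
Proof.
move=> eps0; exists (Rmax 27 ((48 - ln (eps / 16)) / 7 + 1)); split; first exact: Rmax_l.
have := Rmax_r 27 ((48 - ln (eps / 16)) / 7 + 1); set A := Rmax _ _ => hA.
suff : exp (48 - 7 * A) < eps / 16 by lra.
by rewrite -[X in _ < X](exp_ln (eps / 16)); [apply: exp_increasing | ]; lra.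
Qed.

Theorem mainTheorem3 (alpha : R) (halpha : 4 < alpha) :
  forall eps : R, 0 < eps ->
  exists S0 : nat,
    forall (s t : nat) (P L : finType) (I : P -> L -> bool) (x : P),
      (S0 <= s)%N ->
      is_GQ I s t ->
      locally_sparse I s ->
      INR s * Rpower (ln (INR s)) (2 * alpha) <= INR t ->
      probA I alpha s t x < eps.
Proof.
move=> eps eps_gt0; have [A [A27 A_eps]] := tail_small eps_gt0.
exists (Z.to_nat (up (exp A))) => s t P L I x s_ge gq _ t_large.
have s_large : exp A <= INR s by apply: up_le_INR => //; apply: exp_pos.
have s27 : exp 27 <= INR s by apply: Rle_trans s_large; apply: exp_monotone.
have lnS_ge_A : A <= ln (INR s).
  by rewrite -(ln_exp A); apply: ln_monotone => //; apply: exp_pos.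
have k_ge : ln (INR s) <= INR (threshold s) by apply: Rceil_ge; lra.
apply: (Rle_lt_trans _ _ _ (probA_le x gq (ps_unit halpha s27 t_large))).
apply: (Rle_lt_trans _ _ _ (union_bound_small halpha s27 t_large (card_lines_le_sq gq) k_ge)).
apply: Rle_lt_trans A_eps; apply: Rmult_le_compat_l; first lra.
by apply: exp_monotone; lra.
Qed.
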